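(* Let $(G,\cdot)$ be a loop with identity $e$ and $(H,\cdot)$ a non-trivial subloop such that $(xs\cdot z)s=x(sz\cdot s)$ for all $x,z\in G$, $s\in H$. Let $(U,V,W)\in\mathrm{S_{1st}AUT}(G_H)$, $s_1=eU$ and $s_2=eV$. Then $A=UR_{s_1}^{-1}\in\mathrm{S_{1st}PAUT}(G_H)$ with first Smarandache companion $c=s_1s_2\cdot s_1$ (i.e. $(A,AR_c,AR_c)\in\mathrm{S_{1st}AUT}(G_H)$), and $$(U,V,W)=(A,AR_c,AR_c)\,(R_{s_1}^{-1},L_{s_1}R_{s_1},R_{s_1})^{-1}.$$
   Context: Juxtaposition binds more tightly than $\cdot$. Maps are written on the right and composed left to right; $xR_s=x\cdot s$, $xL_s=s\cdot x$. $SSYM(G_H)$ is the set of bijections $A$ of $G$ with $HA=H$. $\mathrm{S_{1st}AUT}(G_H)$ is the set of triples $(U,V,W)$ with $U,V,W\in SSYM(G_H)$ and $xU\cdot yV=(x\cdot y)W$ for all $x,y\in G$; triples are multiplied componentwise. $\mathrm{S_{1st}PAUT}(G_H)$ is the set of $A\in SSYM(G_H)$ for which there is $c\in H$ with $(A,AR_c,AR_c)\in\mathrm{S_{1st}AUT}(G_H)$; $c$ is called a first Smarandache companion of $A$. *)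

From mathcomp Require Import ssreflect ssrfun ssrbool.

Set Implicit Arguments.
Unset Strict Implicit.

Section Loops.
Variable G : Type.

(* A loop (G, op) with identity e, presented with its left division
   ldiv a b = a \ b and right division rdiv b a = b / a. *)
Definition is_loop (op : G -> G -> G) (e : G)
  (ldiv rdiv : G -> G -> G) : Prop :=
  (forall x, op e x = x) /\ (forall x, op x e = x) /\
  (forall a b, op a (ldiv a b) = b) /\ (forall a b, ldiv a (op a b) = b) /\
  (forall a b, op (rdiv b a) a = b) /\ (forall a b, rdiv (op b a) a = b).

Definition is_subloop (op : G -> G -> G) (e : G) (ldiv rdiv : G -> G -> G)
  (H : G -> Prop) : Prop :=
  H e /\ (forall x y, H x -> H y -> H (op x y)) /\
  (forall x y, H x -> H y -> H (ldiv x y)) /\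
  (forall x y, H x -> H y -> H (rdiv x y)).

(* Maps are written on the right and composed left to right:
   x (f g) = (x f) g. *)
Definition mcomp (f g : G -> G) : G -> G := fun x => g (f x).

Definition Rt (op : G -> G -> G) (s : G) : G -> G := fun x => op x s.
Definition Lt (op : G -> G -> G) (s : G) : G -> G := fun x => op s x.
Definition Rinv (rdiv : G -> G -> G) (s : G) : G -> G := fun x => rdiv x s.
Definition Linv (ldiv : G -> G -> G) (s : G) : G -> G := fun x => ldiv s x.

Definition SSYM (H : G -> Prop) (A : G -> G) : Prop :=
  bijective A /\ (forall y, H y <-> exists x, H x /\ A x = y).

Definition S1AUT (op : G -> G -> G) (H : G -> Prop) (U V W : G -> G) : Prop :=
  SSYM H U /\ SSYM H V /\ SSYM H W /\
  (forall x y, op (U x) (V y) = W (op x y)).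

Definition first_companion (op : G -> G -> G) (H : G -> Prop) (A : G -> G)
  (c : G) : Prop :=
  H c /\ S1AUT op H A (mcomp A (Rt op c)) (mcomp A (Rt op c)).

Definition S1PAUT (op : G -> G -> G) (H : G -> Prop) (A : G -> G) : Prop :=
  SSYM H A /\ exists c, first_companion op H A c.

Definition tmul (T1 T2 : (G -> G) * (G -> G) * (G -> G)) :=
  let: (a1, b1, c1) := T1 in let: (a2, b2, c2) := T2 in
  (mcomp a1 a2, mcomp b1 b2, mcomp c1 c2).

End Loops.

(* Writing s1 = eU and s2 = eV, the autotopism identity at x = e and y = e
   gives yW = s1 . yV and xW = xU . s2.  With xA = xU / s1 the hypothesis
   (xs . z)s = x(sz . s) for s = s1, z = s2 turns xA . c into xW . s1, and for
   z = yV it turns xA . (yA . c) = xA . (s1 . yV) s1 into (xU . yV) s1, which is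
   (xy)W . s1 = (xy)A . c.  Hence (A, AR_c, AR_c) is an autotopism and the
   factorisation of (U, V, W) is read off from the same identities. *)

From mathcomp Require Import ssreflect ssrfun ssrbool.
From Stdlib Require Import FunctionalExtensionality.

Set Implicit Arguments.
Unset Strict Implicit.

Section SSYMClosure.
Variables (G : Type) (H : G -> Prop).

Lemma SSYM_mem (f : G -> G) x : SSYM H f -> H x -> H (f x).
Proof. by case=> _ /(_ (f x)) [_ im_f] Hx; apply: im_f; exists x. Qed.

Lemma SSYM_mcomp (f g : G -> G) : SSYM H f -> SSYM H g -> SSYM H (mcomp f g).
Proof.
move=> [bij_f im_f] [bij_g im_g]; split; first exact: bij_comp bij_g bij_f.
move=> y; split.
- by move=> /im_g [_ [/im_f [x [Hx <-]] <-]]; exists x.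
- by move=> [x [Hx <-]]; apply/im_g; exists (f x); split=> //; apply/im_f; exists x.
Qed.

End SSYMClosure.

Section Translations.
Variables (G : Type) (op : G -> G -> G) (e : G) (ldiv rdiv : G -> G -> G).
Variable H : G -> Prop.
Hypotheses (hG : is_loop op e ldiv rdiv) (hH : is_subloop op e ldiv rdiv H).

Lemma SSYM_Rt s : H s -> SSYM H (Rt op s).
Proof.
case: hG => [_ [_ [_ [_ [mul_rdivK rdiv_mulK]]]]].
case: hH => [_ [H_op [_ H_rdiv]]] Hs; split.
  by exists (Rinv rdiv s) => x; rewrite /Rt /Rinv ?rdiv_mulK ?mul_rdivK.
move=> y; split; last by move=> [x [Hx <-]]; apply: H_op.
by move=> Hy; exists (rdiv y s); split; [apply: H_rdiv | rewrite /Rt mul_rdivK].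
Qed.

Lemma SSYM_Rinv s : H s -> SSYM H (Rinv rdiv s).
Proof.
case: hG => [_ [_ [_ [_ [mul_rdivK rdiv_mulK]]]]].
case: hH => [_ [H_op [_ H_rdiv]]] Hs; split.
  by exists (Rt op s) => x; rewrite /Rt /Rinv ?rdiv_mulK ?mul_rdivK.
move=> y; split; last by move=> [x [Hx <-]]; apply: H_rdiv.
by move=> Hy; exists (op y s); split; [apply: H_op | rewrite /Rinv rdiv_mulK].
Qed.

End Translations.

Section Autotopism.
Variables (G : Type) (op : G -> G -> G) (e : G) (ldiv rdiv : G -> G -> G).
Variable H : G -> Prop.
Hypotheses (hG : is_loop op e ldiv rdiv) (hH : is_subloop op e ldiv rdiv H).
Hypothesis hid : forall x z s, H s ->
  op (op (op x s) z) s = op x (op (op s z) s).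
Variables U V W : G -> G.
Hypothesis hUVW : S1AUT op H U V W.

Local Notation s1 := (U e).
Local Notation s2 := (V e).
Local Notation A := (mcomp U (Rinv rdiv s1)).
Local Notation c := (op (op s1 s2) s1).

Lemma H_s1 : H s1.
Proof. by case: hH => H_e _; case: hUVW => sU _; exact: SSYM_mem sU H_e. Qed.

Lemma H_c : H c.
Proof.
case: hH => H_e [H_op _]; case: hUVW => _ [sV _].
by have Hs1 := H_s1; apply: (H_op _ _ (H_op _ _ Hs1 (SSYM_mem sV H_e)) Hs1).
Qed.

Lemma autotopism_W_Lt y : W y = op s1 (V y).
Proof.
by case: hUVW => _ [_ [_ UVW]]; case: hG => mul1x _; rewrite -[in LHS](mul1x y) -UVW.
Qed.

Lemma autotopism_W_Rt x : W x = op (U x) s2.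
Proof.
by case: hUVW => _ [_ [_ UVW]]; case: hG => _ [mulx1 _]; rewrite -[in LHS](mulx1 x) -UVW.
Qed.

Lemma U_eq_A_mul x : U x = op (A x) s1.
Proof. by case: hG => _ [_ [_ [_ [mul_rdivK _]]]]; rewrite /mcomp /Rinv mul_rdivK. Qed.

Lemma A_mul_c x : op (A x) c = op (W x) s1.
Proof. by rewrite -hid; [rewrite -U_eq_A_mul -autotopism_W_Rt | exact: H_s1]. Qed.

Lemma companion_autotopism x y : op (A x) (op (A y) c) = op (A (op x y)) c.
Proof.
case: hUVW => _ [_ [_ UVW]].
rewrite (A_mul_c y) (autotopism_W_Lt y) -hid; last exact: H_s1.
by rewrite -U_eq_A_mul UVW A_mul_c.
Qed.

Lemma first_companion_A : first_companion op H A c.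
Proof.
case: hUVW => sU _.
have sA : SSYM H A by apply: SSYM_mcomp; last apply: (SSYM_Rinv hG hH H_s1).
have sAc : SSYM H (mcomp A (Rt op c)).
  by apply: SSYM_mcomp; last apply: (SSYM_Rt hG hH H_c).
by split; [exact: H_c | do 3!split=> //; exact: companion_autotopism].
Qed.

Lemma autotopism_factorisation :
  (U, V, W) =
    tmul (A, mcomp A (Rt op c), mcomp A (Rt op c))
      (Rt op s1, mcomp (Rinv rdiv s1) (Linv ldiv s1), Rinv rdiv s1).
Proof.
case: hG => _ [_ [_ [ldiv_mulK [_ rdiv_mulK]]]].
rewrite /tmul; congr (_, _, _); apply: functional_extensionality => x.
- exact: U_eq_A_mul.
- change (V x = ldiv s1 (rdiv (op (A x) c) s1)).
  by rewrite A_mul_c rdiv_mulK autotopism_W_Lt ldiv_mulK.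
- change (W x = rdiv (op (A x) c) s1).
  by rewrite A_mul_c rdiv_mulK.
Qed.

End Autotopism.

Theorem theorem3p7 (G : Type) (op : G -> G -> G) (e : G)
  (ldiv rdiv : G -> G -> G) (H : G -> Prop)
  (hG : is_loop op e ldiv rdiv)
  (hH : is_subloop op e ldiv rdiv H)
  (hnt : exists h, H h /\ h <> e)
  (hid : forall x z s, H s ->
     op (op (op x s) z) s = op x (op (op s z) s))
  (U V W : G -> G)
  (hUVW : S1AUT op H U V W) :
  let s1 := U e in
  let s2 := V e in
  let A := mcomp U (Rinv rdiv s1) in
  let c := op (op s1 s2) s1 in
  S1PAUT op H A /\ first_companion op H A c /\
  (U, V, W) =
    tmul (A, mcomp A (Rt op c), mcomp A (Rt op c))
      (Rt op s1, mcomp (Rinv rdiv s1) (Linv ldiv s1), Rinv rdiv s1).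
Proof.
move=> s1 s2 A c.
have companion : first_companion op H A c := first_companion_A hG hH hid hUVW.
have [_ [sA _]] := companion.
split; first by split=> //; exists c.
split; first exact: companion.
exact: (autotopism_factorisation hG hH hid hUVW).
Qed.
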